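(* Consider proportional reinsurance with $I=1$, $m(t,y,u)=p-q+qu$ and $\sigma(t,y,u)=\sigma_0u$, where $p<q$ and $\sigma_0>0$. Under the ansatz $V(t,x,y)=U(x)\tilde V(t,y)$ for the value function, the optimal reinsurance-investment strategy (the maximiser in the HJB equation) is given in feedback form by $(u^*(t,x,y),a^*(t,x,y))$ with $$u^*(t,x,y)=\begin{cases}0,&(t,x,y)\in A_0,\\ \dfrac{(\sigma_1(t,y)^2+\sigma_2(t,y)^2)q-\mu(t,y)\sigma_0\sigma_1(t,y)}{\sigma_0^2\sigma_2(t,y)^2A(x)},&(t,x,y)\in(A_0\cup A_1)^c,\\ 1,&(t,x,y)\in A_1,\end{cases}$$ where $A_0=\{(t,x,y)\in[0,T]\times\mathbb R^2: q<\frac{\mu(t,y)\sigma_1(t,y)\sigma_0}{\sigma_1(t,y)^2+\sigma_2(t,y)^2}\}$, $A_1=\{(t,x,y)\in[0,T]\times\mathbb R^2: q>\frac{\sigma_0[\sigma_2(t,y)^2A(x)\sigma_0+\mu(t,y)\sigma_1(t,y)]}{\sigma_1(t,y)^2+\sigma_2(t,y)^2}\}$, and $$a^*(t,x,y)=\frac{\mu(t,y)-A(x)\sigma_0u^*(t,x,y)\sigma_1(t,y)}{A(x)(\sigma_1(t,y)^2+\sigma_2(t,y)^2)}.$$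
   Context: Independent Brownian motions $W^1,W^2,W^Y$; environmental process $dY_t=\mu_Y(t,Y_t)dt+\sigma_Y(t,Y_t)dW^Y_t$ with bounded Lipschitz $C^1$ coefficients; $\mu,\sigma_1,\sigma_2$ bounded continuous positive Lipschitz functions of $(t,y)$ with $\sigma_1+\sigma_2$ bounded away from zero. With retention $u_t\in[0,1]$ (fraction of risk kept) and amount $a_t$ invested in the risky asset, the surplus is $dX_t=\{m(t,Y_t,u_t)+a_t\mu(t,Y_t)\}dt+\{\sigma(t,Y_t,u_t)+a_t\sigma_1(t,Y_t)\}dW^1_t+a_t\sigma_2(t,Y_t)dW^2_t$, and the insurer maximises $\mathbb E[U(X_T)]$ over adapted strategies with $\mathbb E\int_0^Ta_t^2dt<\infty$; $V(t,x,y)$ denotes the value function, with HJB equation $0=V_t+\sup_{u,a}[\{m+a\mu\}V_x+\frac12\{(\sigma+a\sigma_1)^2+a^2\sigma_2^2\}V_{xx}]+\mu_YV_y+\frac12\sigma_Y^2V_{yy}$. $U$ is a SAHARA utility: $A(x):=-U''(x)/U'(x)=\alpha/\sqrt{b^2+(x-d)^2}$, $\alpha>0$, $b>0$, $d\in\mathbb R$. In this section the paper works under the ansatz that $V(t,x,y)=U(x)\tilde V(t,y)$ for some function $\tilde V$. *)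

From Stdlib Require Import Reals.
From Coquelicot Require Import Coquelicot.
Open Scope R_scope.

Definition sahara_A (alpha b d x : R) : R :=
  alpha / sqrt (b ^ 2 + (x - d) ^ 2).

Definition m_prop (p q u : R) : R := p - q + q * u.
Definition sigma_prop (sigma0 u : R) : R := sigma0 * u.

(* The (u,a)-dependent part of the HJB equation:
   {m + a mu} V_x + 1/2 {(sigma + a sigma1)^2 + a^2 sigma2^2} V_xx. *)
Definition hjb_term (p q sigma0 mu s1 s2 Vx Vxx u a : R) : R :=
  (m_prop p q u + a * mu) * Vx
  + / 2 * ((sigma_prop sigma0 u + a * s1) ^ 2 + a ^ 2 * s2 ^ 2) * Vxx.

(* Regions A_0 and A_1 (membership at (t,x,y), expressed through the
   values mu(t,y), sigma1(t,y), sigma2(t,y) and Ax = A(x)). *)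
Definition in_A0 (q sigma0 mu s1 s2 : R) : Prop :=
  q < mu * s1 * sigma0 / (s1 ^ 2 + s2 ^ 2).
Definition in_A1 (q sigma0 mu s1 s2 Ax : R) : Prop :=
  q > sigma0 * (s2 ^ 2 * Ax * sigma0 + mu * s1) / (s1 ^ 2 + s2 ^ 2).

Definition u_star (q sigma0 mu s1 s2 Ax : R) : R :=
  if Rlt_dec q (mu * s1 * sigma0 / (s1 ^ 2 + s2 ^ 2)) then 0
  else if Rgt_dec q (sigma0 * (s2 ^ 2 * Ax * sigma0 + mu * s1) / (s1 ^ 2 + s2 ^ 2))
  then 1
  else ((s1 ^ 2 + s2 ^ 2) * q - mu * sigma0 * s1) / (sigma0 ^ 2 * s2 ^ 2 * Ax).

Definition a_star (q sigma0 mu s1 s2 Ax : R) : R :=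
  (mu - Ax * sigma0 * u_star q sigma0 mu s1 s2 Ax * s1) / (Ax * (s1 ^ 2 + s2 ^ 2)).

(* Since A(x) > 0 and V = U(x) Vtilde(t,y) with U' > 0, Vtilde > 0, we have
   V_xx = -A(x) V_x with V_x > 0, so the HJB Hamiltonian is a strictly concave
   quadratic in (u, a).  For fixed u its maximiser in a is a* (first-order
   condition); substituting a* leaves a concave quadratic in u whose
   unconstrained maximiser is the interior formula for u*, and u* is its
   projection onto [0, 1].  Expanding the Hamiltonian around u*, a* gives a
   linear term that is nonpositive on [0, 1] by this projection property plus
   a positive definite quadratic form, which yields both optimality and
   uniqueness of the maximiser.  Only positivity of sigma0, sigma2, A, U' and
   Vtilde enters. *)
From Stdlib Require Import Reals Lra Psatz.
From Coquelicot Require Import Coquelicot.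
Open Scope R_scope.

Lemma sahara_A_pos alpha b d x : 0 < alpha -> 0 < b -> 0 < sahara_A alpha b d x.
Proof.
  intros halpha hb. unfold sahara_A.
  apply Rdiv_lt_0_compat; [exact halpha|]. apply sqrt_lt_R0.
  pose proof (pow_lt b 2 hb). pose proof (pow2_ge_0 (x - d)). lra.
Qed.

Lemma quad_form_eq0 s0 s1 s2 x y :
  s0 <> 0 -> s2 <> 0 -> (s0 * x + y * s1) ^ 2 + y ^ 2 * s2 ^ 2 = 0 -> x = 0 /\ y = 0.
Proof.
  intros hs0 hs2 hQ.
  pose proof (pow2_ge_0 (s0 * x + y * s1)) as hsq1.
  pose proof (pow2_ge_0 (y * s2)) as hsq2.
  assert (hy : y = 0).
  { assert (hy2 : y * s2 = 0) by (apply Rsqr_0_uniq; unfold Rsqr; nra).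
    apply Rmult_integral in hy2 as [|]; [assumption|contradiction]. }
  subst y. split; [|reflexivity].
  assert (hx : s0 * x = 0) by (apply Rsqr_0_uniq; unfold Rsqr; nra).
  apply Rmult_integral in hx as [|]; [contradiction|assumption].
Qed.

Section HJBMaximiser.

Variables q s0 mu s1 s2 A : R.
Hypotheses (hs0 : 0 < s0) (hs2 : 0 < s2) (hA : 0 < A).

Local Notation S := (s1 ^ 2 + s2 ^ 2).
Local Notation us := (u_star q s0 mu s1 s2 A).
Local Notation as_ := (a_star q s0 mu s1 s2 A).

Lemma u_star_A0 : in_A0 q s0 mu s1 s2 -> us = 0.
Proof. intros h. unfold u_star. now destruct Rlt_dec. Qed.

Lemma in_A0_A1_disjoint : in_A0 q s0 mu s1 s2 -> ~ in_A1 q s0 mu s1 s2 A.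
Proof.
  unfold in_A0, in_A1. intros h0 h1.
  assert (hS : S > 0) by nra.
  apply Rlt_div_r in h0; [|exact hS]. apply Rgt_lt, Rlt_div_l in h1; [|exact hS].
  assert (0 < s0 * (s0 * (s2 ^ 2 * A))) by (repeat apply Rmult_lt_0_compat; nra).
  nra.
Qed.

Lemma u_star_A1 : in_A1 q s0 mu s1 s2 A -> us = 1.
Proof.
  intros h. unfold u_star. destruct Rlt_dec as [h0|_].
  - exfalso. exact (in_A0_A1_disjoint h0 h).
  - now destruct Rgt_dec.
Qed.

Lemma u_star_interior :
  ~ in_A0 q s0 mu s1 s2 -> ~ in_A1 q s0 mu s1 s2 A ->
  us = (S * q - mu * s0 * s1) / (s0 ^ 2 * s2 ^ 2 * A).
Proof.
  intros h0 h1. unfold u_star.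
  destruct Rlt_dec; [contradiction|]. destruct Rgt_dec; [contradiction|reflexivity].
Qed.

Lemma u_star_cases :
  (q * S < mu * s1 * s0 /\ us = 0) \/
  (s0 * (s2 ^ 2 * A * s0 + mu * s1) < q * S /\ us = 1) \/
  (mu * s1 * s0 <= q * S <= s0 * (s2 ^ 2 * A * s0 + mu * s1) /\
   us = (S * q - mu * s0 * s1) / (s0 ^ 2 * s2 ^ 2 * A)).
Proof.
  assert (hS : S > 0) by nra.
  destruct (Rlt_dec q (mu * s1 * s0 / S)) as [h0|h0].
  { left. split; [apply Rlt_div_r; [exact hS|exact h0]|exact (u_star_A0 h0)]. }
  destruct (Rgt_dec q (s0 * (s2 ^ 2 * A * s0 + mu * s1) / S)) as [h1|h1].
  { right; left. split; [apply Rlt_div_l; [exact hS|exact h1]|exact (u_star_A1 h1)]. }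
  right; right. split; [|exact (u_star_interior h0 h1)].
  apply Rnot_lt_le in h0. apply Rnot_gt_le in h1.
  split; [apply Rle_div_l|apply Rle_div_r]; assumption.
Qed.

Lemma u_star_range : 0 <= us <= 1.
Proof.
  assert (hd : 0 < s0 ^ 2 * s2 ^ 2 * A) by (repeat apply Rmult_lt_0_compat; nra).
  destruct u_star_cases as [[_ ->]|[[_ ->]|[[h0 h1] ->]]]; try lra.
  split.
  - apply Rdiv_le_0_compat; [nra|exact hd].
  - apply Rle_div_l; [exact hd|nra].
Qed.

Lemma a_star_first_order : mu = A * (s1 * (s0 * us + as_ * s1) + as_ * s2 ^ 2).
Proof.
  assert (hS : S > 0) by nra.
  unfold a_star at 1 2. field. lra.
Qed.

(* Times S, the marginal gain in u at u*, a* is q S - s0^2 s2^2 A u* - mu s1 s0: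
   it vanishes in the interior region and is negative on A0 (u* = 0), positive
   on A1 (u* = 1). *)
Lemma u_star_variational u :
  0 <= u <= 1 -> (q - A * s0 * (s0 * us + as_ * s1)) * (us - u) >= 0.
Proof.
  intros hu.
  assert (hS : S > 0) by nra.
  assert (hgain : (q - A * s0 * (s0 * us + as_ * s1)) * S
                  = q * S - s0 ^ 2 * s2 ^ 2 * A * us - mu * s1 * s0).
  { unfold a_star at 1. field. lra. }
  apply Rle_ge, (Rmult_le_reg_r S); [exact hS|].
  rewrite Rmult_0_l, Rmult_comm, <- Rmult_assoc, (Rmult_comm S), hgain.
  destruct u_star_cases as [[h ->]|[[h ->]|[_ ->]]].
  - nra.
  - assert (0 < s0 * (s0 * (s2 ^ 2 * A))) by (repeat apply Rmult_lt_0_compat; nra).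
    nra.
  - right. field. repeat split; lra.
Qed.

End HJBMaximiser.

Lemma hjb_term_expand p q s0 mu s1 s2 Vx A u a u0 a0 :
  mu = A * (s1 * (s0 * u0 + a0 * s1) + a0 * s2 ^ 2) ->
  hjb_term p q s0 mu s1 s2 Vx (- (A * Vx)) u0 a0
  - hjb_term p q s0 mu s1 s2 Vx (- (A * Vx)) u a
  = Vx * ((q - A * s0 * (s0 * u0 + a0 * s1)) * (u0 - u)
          + A / 2 * ((s0 * (u - u0) + (a - a0) * s1) ^ 2 + (a - a0) ^ 2 * s2 ^ 2)).
Proof. intros ->. unfold hjb_term, m_prop, sigma_prop. field. Qed.

Section HJBConcave.

Variables p q s0 mu s1 s2 Vx A u0 a0 : R.
Hypotheses (hs0 : 0 < s0) (hs2 : 0 < s2) (hA : 0 < A) (hVx : 0 < Vx).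
Hypothesis hfoc : mu = A * (s1 * (s0 * u0 + a0 * s1) + a0 * s2 ^ 2).

Local Notation H u a := (hjb_term p q s0 mu s1 s2 Vx (- (A * Vx)) u a).

Lemma hjb_term_le u a :
  (q - A * s0 * (s0 * u0 + a0 * s1)) * (u0 - u) >= 0 -> H u a <= H u0 a0.
Proof.
  intros hgain. apply Rminus_le_0. rewrite hjb_term_expand by exact hfoc.
  apply Rmult_le_pos; [lra|]. apply Rplus_le_le_0_compat; [lra|].
  apply Rmult_le_pos; [lra|]. apply Rplus_le_le_0_compat; [apply pow2_ge_0|].
  apply Rmult_le_pos; apply pow2_ge_0.
Qed.

Lemma hjb_term_eq u a :
  (q - A * s0 * (s0 * u0 + a0 * s1)) * (u0 - u) >= 0 ->
  H u a = H u0 a0 -> u = u0 /\ a = a0.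
Proof.
  intros hgain heq.
  pose proof (hjb_term_expand p q s0 mu s1 s2 Vx A u a u0 a0 hfoc) as hexp.
  rewrite heq, Rminus_diag in hexp. symmetry in hexp.
  pose proof (pow2_ge_0 (s0 * (u - u0) + (a - a0) * s1)) as hsq1.
  pose proof (Rmult_le_pos _ _ (pow2_ge_0 (a - a0)) (pow2_ge_0 s2)) as hsq2.
  assert (hQ : (s0 * (u - u0) + (a - a0) * s1) ^ 2 + (a - a0) ^ 2 * s2 ^ 2 = 0).
  { apply Rmult_integral in hexp as [|hsum]; [lra|]. nra. }
  apply quad_form_eq0 in hQ as [hu ha]; lra.
Qed.

End HJBConcave.

Theorem proposition5p2
  (T p q sigma0 alpha b d : R)
  (mu sigma1 sigma2 : R -> R -> R)
  (U U' U'' : R -> R) (Vtilde : R -> R -> R)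
  (hT : 0 < T) (hpq : p < q) (hs0 : 0 < sigma0)
  (halpha : 0 < alpha) (hb : 0 < b)
  (hmu : forall t y, 0 < mu t y)
  (hs1 : forall t y, 0 < sigma1 t y)
  (hs2 : forall t y, 0 < sigma2 t y)
  (hU' : forall x, is_derive U x (U' x))
  (hU'' : forall x, is_derive U' x (U'' x))
  (hU'pos : forall x, 0 < U' x)
  (hA : forall x, - U'' x / U' x = sahara_A alpha b d x)
  (hV : forall t y, 0 <= t <= T -> 0 < Vtilde t y) :
  forall t x y, 0 <= t <= T ->
    let Ax := sahara_A alpha b d x in
    let Vx := U' x * Vtilde t y in
    let Vxx := U'' x * Vtilde t y in
    let us := u_star q sigma0 (mu t y) (sigma1 t y) (sigma2 t y) Ax in
    let as_ := a_star q sigma0 (mu t y) (sigma1 t y) (sigma2 t y) Ax in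
    (in_A0 q sigma0 (mu t y) (sigma1 t y) (sigma2 t y) -> us = 0) /\
    (in_A1 q sigma0 (mu t y) (sigma1 t y) (sigma2 t y) Ax -> us = 1) /\
    (~ in_A0 q sigma0 (mu t y) (sigma1 t y) (sigma2 t y) ->
     ~ in_A1 q sigma0 (mu t y) (sigma1 t y) (sigma2 t y) Ax ->
     us = ((sigma1 t y ^ 2 + sigma2 t y ^ 2) * q - mu t y * sigma0 * sigma1 t y)
          / (sigma0 ^ 2 * sigma2 t y ^ 2 * Ax)) /\
    0 <= us <= 1 /\
    (forall u a, 0 <= u <= 1 ->
       hjb_term p q sigma0 (mu t y) (sigma1 t y) (sigma2 t y) Vx Vxx u a
       <= hjb_term p q sigma0 (mu t y) (sigma1 t y) (sigma2 t y) Vx Vxx us as_) /\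
    (forall u a, 0 <= u <= 1 ->
       hjb_term p q sigma0 (mu t y) (sigma1 t y) (sigma2 t y) Vx Vxx u a
       = hjb_term p q sigma0 (mu t y) (sigma1 t y) (sigma2 t y) Vx Vxx us as_ ->
       u = us /\ a = as_).
Proof.
  intros t x y ht Ax Vx Vxx us as_.
  pose proof (sahara_A_pos alpha b d x halpha hb) as hAx.
  pose proof (Rmult_lt_0_compat _ _ (hU'pos x) (hV t y ht)) as hVx.
  assert (hVxx : Vxx = - (Ax * Vx)).
  { unfold Vxx, Vx, Ax. rewrite <- (hA x). field. apply Rgt_not_eq, hU'pos. }
  rewrite hVxx.
  pose proof (a_star_first_order q sigma0 (mu t y) (sigma1 t y) (sigma2 t y) Ax
                (hs2 t y) hAx) as hfoc.
  pose proof (u_star_variational q sigma0 (mu t y) (sigma1 t y) (sigma2 t y) Ax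
                hs0 (hs2 t y) hAx) as hgain.
  pose proof (u_star_range q sigma0 (mu t y) (sigma1 t y) (sigma2 t y) Ax
                hs0 (hs2 t y) hAx) as hrange.
  split; [apply u_star_A0|].
  split; [apply u_star_A1; auto|].
  split; [apply u_star_interior|].
  split; [exact hrange|].
  split; intros u a hu.
  - apply hjb_term_le; auto.
  - apply hjb_term_eq; auto.
Qed.
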